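(* Let $(G,S)$ be an orientable ribbon graph, let $\Sigma$ be the closed surface obtained from $S$ by attaching a disk along each boundary component, and let $g$ be the genus of $\Sigma$. Then $$BR_{G,S}(X,Y,Z)=Y^{g}\,P_{G,\Sigma}(X-1,\,Y,\,YZ^2,\,Y^{-1}).$$
   Context: An orientable ribbon graph $(G,S)$ is a graph $G$ embedded in a compact orientable surface with boundary $S$ such that the inclusion is a homotopy equivalence; $S$ is viewed as a union of disks (neighborhoods of vertices) and bands (neighborhoods of edges). A spanning subgraph $H\subset G$ inherits a ribbon structure: its surface is the union of all vertex disks and the bands of the edges of $H$. The Bollobás–Riordan polynomial is $$BR_{G,S}(X,Y,Z)=\sum_{H\subset G}(X-1)^{r(G)-r(H)}\,Y^{n(H)}\,Z^{c(H)-bc(H)+n(H)},$$ where $c(H)$ is the number of components of $H$, $r(H)=v(G)-c(H)$, $n(H)=e(H)-r(H)$ (with $v,e$ numbers of vertices and edges), and $bc(H)$ is the number of boundary components of the surface of the ribbon subgraph $H$. For a graph $G$ in a closed orientable surface $\Sigma$ and a spanning subgraph $H$: $k(H)=\dim\ker\big(H_1(H;\mathbb R)\to H_1(\Sigma;\mathbb R)\big)$; $s(H)$ is twice the genus of a regular neighborhood $\mathcal H$ of $H$ in $\Sigma$ (genus of a surface with boundary meaning the genus after capping boundary circles with disks); $s^{\perp}(H)$ is twice the genus of $\Sigma\smallsetminus\mathcal H$; and $$P_{G,\Sigma}(X,Y,A,B)=\sum_{H\subset G} X^{c(H)-c(G)}\,Y^{k(H)}\,A^{s(H)/2}\,B^{s^{\perp}(H)/2}.$$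 *)

(* Orientable ribbon graphs are modelled as combinatorial
   maps (rotation systems) with explicit vertex set (to allow isolated
   vertices). *)
From HB Require Import structures.
From mathcomp Require Import all_boot all_order all_algebra all_fingroup.
Set Implicit Arguments. Unset Strict Implicit. Unset Printing Implicit Defensive.
Import Order.TTheory GRing.Theory Num.Theory.

(* A ribbon graph: vertices V, darts (half-edges) D, [rg_vert d] the vertex
   at which d sits, [rg_rot] the cyclic order of darts around each vertex
   (orientation of the vertex disks), [rg_inv] the fixed-point-free involution
   pairing the two darts of each edge (band). *)
Record ribbon_graph := RibbonGraph {
  rg_V : finType;
  rg_D : finType;
  rg_vert : rg_D -> rg_V;
  rg_rot : {perm rg_D};
  rg_inv : {perm rg_D};
  rg_inv_invol : forall d, rg_inv (rg_inv d) = d;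
  rg_inv_nofix : forall d, rg_inv d != d;
  rg_rot_vert : forall d, rg_vert (rg_rot d) = rg_vert d;
  rg_rot_trans : forall d d', rg_vert d = rg_vert d' -> fconnect rg_rot d d'
}.

Definition ncomp (T : finType) (e : rel T) (P : {pred T}) : nat :=
  #|[set [set y | connect e x y] | x in P]|.

Section RibbonDefs.
Variable G : ribbon_graph.
Local Notation V := (rg_V G).
Local Notation D := (rg_D G).
Local Notation vert := (@rg_vert G).
Local Notation s := (@rg_rot G).
Local Notation a := (@rg_inv G).

(* spanning subgraphs H are given by their dart sets A, closed under a *)
Definition is_subgraph (A : {set D}) : bool := a @: A == A.

Definition rg_phi (d : D) : D := s (a d).

Definition nV : nat := #|V|.
Definition nE (A : {set D}) : nat := #|[set [set d; a d] | d in A]|.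
Definition vrel (A : {set D}) : rel V :=
  fun x y => [exists d, [&& d \in A, vert d == x & vert (a d) == y]].
Definition nC (A : {set D}) : nat := ncomp (vrel A) predT.

(* ribbon subgraph structure: induced rotation at vertices, boundary walks *)
Definition nextA (A : {set D}) (d : D) : D :=
  iter (find (fun k => iter k.+1 s d \in A) (iota 0 #|D|)).+1 s d.
Definition phiA (A : {set D}) (d : D) : D := nextA A (a d).
(* vertices not incident to any edge of H (each contributes one boundary
   circle, the boundary of its vertex disk) *)
Definition n_isol (A : {set D}) : nat :=
  #|[set x : V | [forall d in A, vert d != x]]|.
Definition bc (A : {set D}) : nat := ncomp (frel (phiA A)) (mem A) + n_isol A.

Definition rk (A : {set D}) : int := (nV%:Z - (nC A)%:Z)%R.
Definition nul (A : {set D}) : int := ((nE A)%:Z - rk A)%R.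

(* s(H) = twice the genus of the capped surface of the ribbon subgraph H,
   via Euler characteristic: chi = v - e(H) = sum_i (2 - 2 g_i - b_i) *)
Definition sH (A : {set D}) : int :=
  (2 * (nC A)%:Z - nV%:Z + (nE A)%:Z - (bc A)%:Z)%R.

Definition genus_Sigma : int := (sH [set: D] %/ 2)%Z.

(* s^perp(H): twice the genus of Sigma \ (regular nbhd of H).  The complement
   is the union of the capping disks of Sigma (one per boundary component of
   S: the faces = phi-orbits, plus one cap for each isolated vertex of G)
   joined by the bands of the edges not in H; its boundary is the boundary of
   the neighbourhood of H (bc(H) circles). *)
Definition drel (A : {set D}) : rel D :=
  fun d d' => fconnect rg_phi d d' || ((d \notin A) && (d' == a d)).
Definition nCperp (A : {set D}) : nat := ncomp (drel A) predT + n_isol [set: D].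
Definition sperp (A : {set D}) : int :=
  (2 * (nCperp A)%:Z - (bc [set: D])%:Z + (nE [set: D])%:Z - (nE A)%:Z
    - (bc A)%:Z)%R.

(* k(H) = dim ker (H_1(H) -> H_1(Sigma)), computed in cellular homology
   (rational coefficients; same dimension as over R).  1-chains are
   functions c on darts with c (a d) = - c d (c d = coefficient of the edge
   oriented from vert d to vert (a d)). *)
Local Open Scope ring_scope.
Definition dv (i : 'I_#|D|) : D := enum_val i.
(* rows: boundaries of the 2-cells (faces) *)
Definition Bmx : 'M[rat]_#|D| :=
  \matrix_(i, j) ((fconnect rg_phi (dv i) (dv j))%:R
                  - (fconnect rg_phi (dv i) (a (dv j)))%:R).
(* constraints: antisymmetry, support in H, zero boundary at every vertex *)
Definition Psi1 : 'M[rat]_(#|D|, #|D|) :=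
  \matrix_(i, j) ((dv i == dv j)%:R + (dv i == a (dv j))%:R).
Definition Psi2 (A : {set D}) : 'M[rat]_(#|D|, #|D|) :=
  \matrix_(i, j) ((dv i == dv j) && (dv j \notin A))%:R.
Definition Psi3 : 'M[rat]_(#|D|, #|V|) :=
  \matrix_(i, j) (vert (dv i) == enum_val j)%:R.
Definition Z1 (A : {set D}) : 'M[rat]_#|D| :=
  kermx (row_mx Psi1 (row_mx (Psi2 A) Psi3)).
Definition kH (A : {set D}) : nat := \rank (Z1 A :&: Bmx)%MS.

Definition BR (R : unitRingType) (X Y Z : R) : R :=
  \sum_(A : {set D} | is_subgraph A)
     (X - 1) ^ (rk [set: D] - rk A)%R * Y ^ (nul A)
       * Z ^ ((nC A)%:Z - (bc A)%:Z + nul A)%R.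

Definition Ppoly (R : unitRingType) (X Y AA BB : R) : R :=
  \sum_(A : {set D} | is_subgraph A)
     X ^ ((nC A)%:Z - (nC [set: D])%:Z)%R * Y ^+ kH A
       * AA ^ (sH A %/ 2)%Z * BB ^ (sperp A %/ 2)%Z.

End RibbonDefs.

From HB Require Import structures.
From mathcomp Require Import all_boot all_order all_algebra all_fingroup zify ring.
Set Implicit Arguments. Unset Strict Implicit. Unset Printing Implicit Defensive.
Import Order.TTheory GRing.Theory Num.Theory.

(* Both sides are sums over the spanning subgraphs H, so it suffices to match
   summands, i.e. exponents; these are related by Euler-characteristic
   bookkeeping once two facts are known.
   First, s(H) is even: the boundary walks of H are the cycles of the product
   of the edge involution and the induced rotation, both restricted to the
   darts of H, so comparing signatures shows that the number of boundary
   walks, plus e(H), plus the number of non-isolated vertices, is even.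
   Second, in cellular homology a 1-cycle of H bounds in Sigma iff it is the
   boundary of a 2-chain constant on the components of Sigma minus H (faces of
   Sigma glued across the edges not in H), and the 2-chains with zero boundary
   are those constant on the components of Sigma; hence
   k(H) = c(Sigma minus H) - c(Sigma). *)

Lemma card_imset_ker (T U W : finType) (f : T -> U) (g : T -> W) (P : {pred T}) :
  {in P &, forall x y, (f x == f y) = (g x == g y)} ->
  #|[set f x | x in P]| = #|[set g x | x in P]|.
Proof.
move=> fg; case: (pickP P) => [x0 Px0 | P0]; last first.
  have imset_P0 : forall (W' : finType) (h : T -> W'), [set h x | x in P] = set0.
    move=> W' h; apply/setP => v; rewrite inE.
    by apply/imsetP => -[x]; rewrite unfold_in P0.
  by rewrite (imset_P0 _ f) (imset_P0 _ g) !cards0.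
pose h z := f (odflt x0 [pick x in P | g x == z]).
have hg : {in P, forall x, h (g x) = f x}.
  move=> x Px; rewrite /h; case: pickP => [y /andP[Py /eqP gy] | /(_ x)] /=.
    by apply/eqP; rewrite fg // gy.
  by rewrite Px eqxx.
have -> : [set f x | x in P] = h @: [set g x | x in P].
  by rewrite -imset_comp; apply: eq_in_imset => x Px /=; rewrite hg.
apply: card_in_imset => _ _ /imsetP[x1 P1 ->] /imsetP[x2 P2 ->].
by rewrite !hg // => /eqP; rewrite fg // => /eqP.
Qed.

Section Components.
Variable T : finType.
Implicit Types (e : rel T) (x y : T).

Lemma homo_connect (U : finType) (h : T -> U) e (e' : rel U) :
  (forall x y, e x y -> connect e' (h x) (h y)) ->
  forall x y, connect e x y -> connect e' (h x) (h y).
Proof.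
move=> he x y /connectP[p]; elim: p x => [|z p IHp] x /=; first by move=> _ ->.
by case/andP=> exz pz ey; apply: connect_trans (he _ _ exz) (IHp z pz ey).
Qed.

Lemma connect_invariant (W : Type) e (f : T -> W) :
  (forall x y, e x y -> f x = f y) -> forall x y, connect e x y -> f x = f y.
Proof.
move=> ef x y /connectP[p]; elim: p x => [|z p IHp] x /=; first by move=> _ ->.
by case/andP=> exz pz ey; rewrite (ef _ _ exz) (IHp z pz ey).
Qed.

Definition component e x : {set T} := [set y | connect e x y].
Definition components e : {set {set T}} := [set component e x | x in predT].

Lemma mem_component e x : x \in component e x.
Proof. by rewrite inE connect0. Qed.

Lemma eq_component e x y :
  connect_sym e -> (component e x == component e y) = connect e x y.
Proof.
move=> esym; apply/eqP/idP => [exy | cxy].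
  by have := mem_component e y; rewrite -exy inE.
apply/setP => z; rewrite !inE; apply/idP/idP => [cxz | cyz].
  by apply: connect_trans cxz; rewrite esym.
exact: connect_trans cxy cyz.
Qed.

Lemma card_imset_split (c : T -> {set T}) (B : {set T}) :
  (forall x, x \in c x) ->
  (forall x y, x \in B -> y \in c x -> y \in B) ->
  (forall x, x \notin B -> c x = [set x]) ->
  #|c @: T| = (#|c @: B| + #|~: B|)%N.
Proof.
move=> c_id c_closed c_single.
have -> : c @: T = (c @: B) :|: (c @: ~: B).
  by rewrite -imsetU setUCr; apply/setP => K; apply/imsetP/imsetP => -[x _ ->]; exists x.
rewrite cardsU; have -> : (c @: B) :&: (c @: ~: B) = set0.
  apply/setP => K; rewrite !inE; apply/andP => -[/imsetP[x xB ->] /imsetP[y]].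
  rewrite inE => /negP yB cxy; apply: yB; apply: c_closed xB _.
  by rewrite cxy c_id.
rewrite cards0 subn0; congr addn.
rewrite (eq_in_imset (g := set1)) ?card_imset //; first exact: set1_inj.
by move=> x; rewrite inE; apply: c_single.
Qed.

Lemma card_porbits_on (p : {perm T}) (B : {set T}) :
  (forall x, x \notin B -> p x = x) -> {homo p : x / x \in B} ->
  #|porbits p| = (#|porbit p @: B| + #|~: B|)%N.
Proof.
move=> p_fix p_stab; apply: card_imset_split => [x | x y xB | x xB].
- exact: porbit_id.
- by case/porbitP=> i ->; rewrite permX; elim: i => //= i; apply: p_stab.
apply/setP => y; rewrite inE; apply/porbitP/eqP => [[i ->] | ->].
  by rewrite permX_fix // p_fix.
by exists 0; rewrite expg0 perm1.
Qed.

End Components.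

Section ComponentMatrix.
Variables (T : finType) (F : fieldType) (e : rel T).
Hypothesis esym : connect_sym e.
Local Open Scope ring_scope.

Definition entry (u : 'rV[F]_#|T|) (x : T) : F := u 0 (enum_rank x).
Definition indic (K : {set T}) : 'rV[F]_#|T| := \row_j (enum_val j \in K)%:R.
Definition component_mx : 'M[F]_(#|components e|, #|T|) :=
  \matrix_(k, j) (enum_val j \in (enum_val k : {set T}))%:R.

Lemma entry_enum_val u j : entry u (enum_val j) = u 0 j.
Proof. by rewrite /entry enum_valK. Qed.

Lemma entry_indic K x : entry (indic K) x = (x \in K)%:R.
Proof. by rewrite /entry mxE enum_rankK. Qed.

Lemma sum_enum_val (f : T -> F) : \sum_(j < #|T|) f (enum_val j) = \sum_x f x.
Proof. by rewrite -big_enum_val. Qed.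

Lemma sum_mul_eq (f : T -> F) y : \sum_x f x * (x == y)%:R = f y.
Proof.
rewrite (bigD1 y) //= eqxx mulr1 big1 ?addr0 // => x /negbTE ->.
by rewrite mulr0.
Qed.

Lemma enum_val_component (k : 'I_#|components e|) :
  exists x, enum_val k = component e x.
Proof. by have /imsetP[x _ ->] := enum_valP k; exists x. Qed.

Lemma mem_enum_val_component (k : 'I_#|components e|) (x : T) :
  (x \in (enum_val k : {set T})) = (enum_val k == component e x).
Proof.
have [z ->] := enum_val_component k.
by rewrite eq_component // inE.
Qed.

Lemma rank_component_mx : \rank component_mx = #|components e|.
Proof.
have [rep repE] := fin_all_exists enum_val_component.
apply/eqP; apply/row_freeP.
exists (\matrix_(j, k) (enum_val j == rep k)%:R); apply/matrixP => k k'.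
transitivity (\sum_x (x \in (enum_val k : {set T}))%:R * (x == rep k')%:R : F).
  by rewrite mxE -sum_enum_val; apply: eq_bigr => j _; rewrite !mxE.
by rewrite sum_mul_eq mem_enum_val_component -repE (inj_eq enum_val_inj) mxE.
Qed.

Lemma sub_component_mxP u :
  (u <= component_mx)%MS <-> (forall x y, e x y -> entry u x = entry u y).
Proof.
split=> [/submxP[c ->] x y exy | u_inv].
  rewrite /entry !mxE; apply: eq_bigr => k _.
  rewrite !mxE !enum_rankK !mem_enum_val_component.
  by rewrite (eqP (_ : component e x == component e y)) // eq_component // connect1.
have [rep repE] := fin_all_exists enum_val_component.
apply/submxP; exists (\row_k entry u (rep k)); apply/rowP => j; rewrite !mxE.
have cjT : component e (enum_val j) \in components e by apply: imset_f.
pose k0 := enum_rank_in cjT (component e (enum_val j)).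
have k0E : enum_val k0 = component e (enum_val j) by rewrite enum_rankK_in.
rewrite (bigD1 k0) //= big1 ?addr0 => [|k k_k0]; last first.
  by rewrite !mxE mem_enum_val_component -k0E (inj_eq enum_val_inj) (negbTE k_k0) mulr0.
rewrite !mxE mem_enum_val_component k0E eqxx mulr1 -entry_enum_val.
apply: connect_invariant u_inv _ _ _.
by have := mem_component e (enum_val j); rewrite -k0E repE inE esym.
Qed.

Lemma row_component_mx k : row k component_mx = indic (enum_val k).
Proof. by apply/rowP => j; rewrite !mxE. Qed.

Lemma indic_component_sub x : (indic (component e x) <= component_mx)%MS.
Proof.
apply/sub_component_mxP => y z eyz; rewrite !entry_indic /component !inE.
suff -> : connect e x y = connect e x z by [].
apply/idP/idP => [cxy | cxz]; first exact: connect_trans cxy (connect1 eyz).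
by apply: connect_trans cxz _; rewrite esym connect1.
Qed.

End ComponentMatrix.

Lemma component_mxS (T : finType) (F : fieldType) (e e' : rel T) :
  connect_sym e -> connect_sym e' -> (forall x y, e' x y -> connect e x y) ->
  (component_mx F e <= component_mx F e')%MS.
Proof.
move=> esym e'sym e'_e; apply/row_subP => k; apply/(sub_component_mxP e'sym).
move=> x y /e'_e; apply: connect_invariant; apply/(sub_component_mxP esym).
exact: row_sub.
Qed.

Section Homology.
Variable G : ribbon_graph.
Local Notation D := (rg_D G).
Local Notation a := (@rg_inv G).
Local Notation s := (@rg_rot G).
Local Notation faces := (frel (@rg_phi G)).
Implicit Types (A : {set D}) (d : D).
Local Open Scope ring_scope.

Lemma eq_inv d d' : (d == a d') = (d' == a d).
Proof. by apply/eqP/eqP => ->; rewrite rg_inv_invol. Qed.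

Lemma rg_phi_inj : injective (@rg_phi G).
Proof. by move=> x y /perm_inj /perm_inj. Qed.

Lemma faces_sym : connect_sym faces.
Proof. exact: fconnect_sym rg_phi_inj. Qed.

Lemma mem_inv_subgraph A d : is_subgraph A -> (a d \in A) = (d \in A).
Proof.
move=> /eqP AE; apply/idP/idP => dA; last by rewrite -AE imset_f.
by rewrite -AE -[d]rg_inv_invol imset_f.
Qed.

Lemma drel_sym A : is_subgraph A -> connect_sym (drel A).
Proof.
move=> HA; apply: sym_connect_sym => d d'; rewrite /drel faces_sym.
congr (_ || _); case: (eqVneq d' (a d)) => [-> | d'_ad].
  by rewrite mem_inv_subgraph // rg_inv_invol eqxx.
by rewrite andbF eq_inv (negbTE d'_ad) andbF.
Qed.

Lemma subgraph0 : is_subgraph (set0 : {set D}).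
Proof. by rewrite /is_subgraph imset0. Qed.

Lemma drel0_inv d : drel set0 d (a d).
Proof. by rewrite /drel inE eqxx orbT. Qed.

(* A row vector x indexed by darts is read either as a 2-chain, constant along
   faces (x d = coefficient of the face containing d), or as a 1-chain
   (x d = coefficient of the edge oriented from vert d to vert (a d)); right
   multiplication by [antisym_mx] is the boundary map from the former to the
   latter. *)
Definition antisym_mx : 'M[rat]_#|D| :=
  \matrix_(j, k) ((dv k == dv j)%:R - (dv k == a (dv j))%:R).

Lemma entry_antisym (x : 'rV[rat]_#|D|) d :
  entry (x *m antisym_mx) d = entry x d - entry x (a d).
Proof.
transitivity (\sum_d' entry x d' * ((d == d')%:R - (d == a d')%:R)).
  rewrite {1}/entry mxE -[RHS]sum_enum_val; apply: eq_bigr => j _.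
  by rewrite entry_enum_val !mxE /dv enum_rankK.
under eq_bigr => d' _ do rewrite mulrBr (eq_sym d d') eq_inv.
by rewrite sumrB !sum_mul_eq.
Qed.

Lemma row_Bmx i : row i (Bmx G) = indic rat (component faces (dv i)) *m antisym_mx.
Proof.
apply/rowP => k.
by rewrite -[RHS]entry_enum_val entry_antisym !entry_indic !inE !mxE.
Qed.

Lemma Bmx_eq : (Bmx G == component_mx rat faces *m antisym_mx)%MS.
Proof.
apply/andP; split; apply/row_subP => i.
  by rewrite row_Bmx submxMr // indic_component_sub //; apply: faces_sym.
rewrite row_mul row_component_mx; have [d ->] := enum_val_component i.
by apply/(eq_row_sub (enum_rank d)); rewrite row_Bmx /dv enum_rankK.
Qed.

Lemma sub_Z1 A (w : 'rV[rat]_#|D|) :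
  (w <= Z1 A)%MS = [&& w *m Psi1 G == 0, w *m Psi2 A == 0 & w *m Psi3 G == 0].
Proof. by rewrite /Z1 sub_kermx !mul_mx_row !row_mx_eq0. Qed.

Lemma mul_Psi1E w j : (w *m Psi1 G) 0 j = entry w (dv j) + entry w (a (dv j)).
Proof.
transitivity (\sum_d entry w d * ((d == dv j)%:R + (d == a (dv j))%:R)).
  by rewrite mxE -[RHS]sum_enum_val; apply: eq_bigr => i _; rewrite entry_enum_val !mxE.
by under eq_bigr => d _ do rewrite mulrDr; rewrite big_split !sum_mul_eq.
Qed.

Lemma mul_Psi2E A w j : (w *m Psi2 A) 0 j = entry w (dv j) * (dv j \notin A)%:R.
Proof.
transitivity (\sum_d (entry w d * (dv j \notin A)%:R) * (d == dv j)%:R).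
  rewrite mxE -[RHS]sum_enum_val; apply: eq_bigr => i _; rewrite entry_enum_val !mxE.
  by case: (dv i == dv j); rewrite ?mulr1 ?mulr0.
by rewrite sum_mul_eq.
Qed.

Lemma mul_Psi3E w v :
  (w *m Psi3 G) 0 v = \sum_(d | rg_vert d == enum_val v) entry w d.
Proof.
rewrite mxE [RHS]big_mkcond -[RHS]sum_enum_val; apply: eq_bigr => i _.
by rewrite entry_enum_val !mxE; case: eqP; rewrite ?mulr1 ?mulr0.
Qed.

Lemma sub_kermx_antisym (x : 'rV[rat]_#|D|) :
  (x <= kermx antisym_mx)%MS <-> (forall d, entry x d = entry x (a d)).
Proof.
rewrite sub_kermx; split=> [/eqP x0 d | x_inv].
  by apply/eqP; rewrite -subr_eq0 -entry_antisym x0 /entry mxE.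
by apply/eqP/rowP => j; rewrite -entry_enum_val entry_antisym x_inv subrr mxE.
Qed.

Lemma antisym_Z1 A (x : 'rV[rat]_#|D|) : is_subgraph A ->
  (x <= component_mx rat (drel A))%MS -> (x *m antisym_mx <= Z1 A)%MS.
Proof.
move=> HA /(sub_component_mxP (drel_sym HA)) x_inv.
have x_face d : entry x (a d) = entry x (s d).
  by apply: x_inv; rewrite /drel connect1 //= /rg_phi rg_inv_invol.
rewrite sub_Z1; apply/and3P; split; apply/eqP/rowP => j; rewrite [RHS]mxE.
- by rewrite mul_Psi1E !entry_antisym rg_inv_invol addrA subrK subrr.
- rewrite mul_Psi2E entry_antisym; case: (boolP (dv j \in A)) => jA.
    by rewrite mulr0.
  by rewrite (x_inv (dv j) (a (dv j))) ?subrr ?mul0r // /drel jA eqxx orbT.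
(* the vertex boundary vanishes since s permutes the darts at each vertex *)
rewrite mul_Psi3E; under eq_bigr => d _ do rewrite entry_antisym x_face.
rewrite sumrB [X in X - _](reindex_inj (@perm_inj _ s)) /=.
by under eq_bigl => d do rewrite rg_rot_vert; rewrite subrr.
Qed.

Lemma antisym_Z1_component A (x : 'rV[rat]_#|D|) : is_subgraph A ->
  (x <= component_mx rat faces)%MS -> (x *m antisym_mx <= Z1 A)%MS ->
  (x <= component_mx rat (drel A))%MS.
Proof.
move=> HA /(sub_component_mxP faces_sym) x_face.
rewrite sub_Z1 => /and3P[_ /eqP /rowP Psi2x _].
apply/(sub_component_mxP (drel_sym HA)) => d d'.
case/orP=> [d_d' | /andP[dA /eqP ->]]; first exact: connect_invariant x_face _ _ d_d'.
have := Psi2x (enum_rank d); rewrite mul_Psi2E !mxE /dv enum_rankK dA mulr1.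
by rewrite entry_antisym => /eqP; rewrite subr_eq0 => /eqP.
Qed.

Lemma component_mx_drel_faces A : is_subgraph A ->
  (component_mx rat (drel A) <= component_mx rat faces)%MS.
Proof.
move=> HA; apply: component_mxS (drel_sym HA) faces_sym _ => d d' dd'.
by rewrite connect1 // /drel connect1.
Qed.

Lemma Z1_cap_Bmx A : is_subgraph A ->
  (Z1 A :&: Bmx G == component_mx rat (drel A) *m antisym_mx)%MS.
Proof.
move=> HA; have /andP[B_sub sub_B] := Bmx_eq.
apply/andP; split.
  apply/row_subP => i; have := row_sub i (Z1 A :&: Bmx G)%MS; rewrite sub_capmx.
  case/andP=> uZ uB; have /submxP[c uE] := submx_trans uB B_sub.
  rewrite uE mulmxA in uZ *.
  by rewrite submxMr // antisym_Z1_component // submxMl.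
rewrite sub_capmx; apply/andP; split.
  by apply/row_subP => k; rewrite row_mul antisym_Z1 // row_sub.
exact: submx_trans (submxMr _ (component_mx_drel_faces HA)) sub_B.
Qed.

Lemma drel0_cap_kermx A : is_subgraph A ->
  (component_mx rat (drel A) :&: kermx antisym_mx == component_mx rat (drel set0))%MS.
Proof.
move=> HA; apply/andP; split.
  apply/row_subP => i.
  have := row_sub i (component_mx rat (drel A) :&: kermx antisym_mx)%MS.
  rewrite sub_capmx => /andP[/(sub_component_mxP (drel_sym HA)) u_inv].
  move/sub_kermx_antisym => u_a.
  apply/(sub_component_mxP (drel_sym subgraph0)) => d d'.
  case/orP=> [d_d' | /andP[_ /eqP ->]]; last exact: u_a.
  by apply: u_inv; rewrite /drel d_d'.
rewrite sub_capmx; apply/andP; split.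
  apply: component_mxS (drel_sym subgraph0) (drel_sym HA) _ => d d'.
  case/orP=> [d_d' | /andP[_ /eqP ->]]; last exact/connect1/drel0_inv.
  by rewrite connect1 // /drel d_d'.
apply/row_subP => i; apply/sub_kermx_antisym => d.
by apply: (sub_component_mxP (drel_sym subgraph0) _).1 (row_sub _ _) _ _ (drel0_inv d).
Qed.

Lemma kH_add A : is_subgraph A ->
  (kH A + ncomp (drel (set0 : {set D})) predT = ncomp (drel A) predT)%N.
Proof.
move=> HA; have := mxrank_mul_ker (component_mx rat (drel A)) antisym_mx.
rewrite (rank_component_mx _ (drel_sym HA)) (eqmx_rank (drel0_cap_kermx HA)).
by rewrite (rank_component_mx _ (drel_sym subgraph0)) -(eqmx_rank (Z1_cap_Bmx HA)).
Qed.

End Homology.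

Section VertexComponents.
Variable G : ribbon_graph.
Local Notation D := (rg_D G).
Local Notation a := (@rg_inv G).
Local Notation vert := (@rg_vert G).
Local Notation vr := (vrel [set: D]).
Local Notation d0 := (drel (set0 : {set D})).

Lemma vrel_inv d : vr (vert d) (vert (a d)).
Proof. by apply/existsP; exists d; rewrite inE !eqxx. Qed.

Lemma vrel_sym : connect_sym vr.
Proof.
apply: sym_connect_sym => x y; apply/existsP/existsP => -[d /and3P[_ /eqP <- /eqP <-]];
  by exists (a d); rewrite inE rg_inv_invol !eqxx.
Qed.

Lemma connect_drel0_vert d d' : vert d = vert d' -> connect d0 d d'.
Proof.
move/rg_rot_trans; apply: (homo_connect (h := id)) => x _ /eqP <- /=.
apply: (@connect_trans _ _ (a x)); apply: connect1; first exact: drel0_inv.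
by rewrite /drel connect1 //= /rg_phi rg_inv_invol.
Qed.

Lemma connect_vrel_drel0 d d' : connect vr (vert d) (vert d') = connect d0 d d'.
Proof.
apply/idP/idP; last first.
  apply: homo_connect => x y /orP[x_y | /andP[_ /eqP ->]]; last exact/connect1/vrel_inv.
  apply: homo_connect x_y => u _ /eqP <-.
  by rewrite connect1 // /rg_phi rg_rot_vert vrel_inv.
case/connectP=> p; elim: p d => [|x p IHp] d /=.
  by move=> _ /esym/connect_drel0_vert.
case/andP=> /existsP[d1 /and3P[_ /eqP d1E /eqP ad1E]] px d'E.
apply: (connect_trans (connect_drel0_vert (esym d1E))).
apply: (@connect_trans _ _ (a d1)); first exact/connect1/drel0_inv.
by apply: IHp; rewrite ?ad1E.
Qed.

Lemma isolated_vrel_component x :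
  x \notin [set vert d | d : D] -> component vr x = [set x].
Proof.
move=> x_iso; apply/setP => y; rewrite !inE; apply/idP/eqP => [|->]; last exact: connect0.
case/connectP=> [[_ -> //| z p]] /= /andP[/existsP[d /and3P[_ /eqP dE _]]].
by case/imsetP: x_iso; exists d.
Qed.

Lemma nC_setT : nC [set: D] = (ncomp d0 predT + n_isol [set: D])%N.
Proof.
have isolatedE : ~: [set vert d | d : D] = [set x | [forall d in [set: D], vert d != x]].
  apply/setP => x; rewrite !inE; apply/negP/forallP => [x_iso d | x_iso /imsetP[d _ xE]].
    by rewrite inE /=; apply/eqP => dE; apply: x_iso; apply/imsetP; exists d.
  by have := x_iso d; rewrite inE xE eqxx.
rewrite /nC /ncomp /n_isol -isolatedE.
rewrite (card_imset_split (c := component vr) (B := [set vert d | d : D])); first last.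
- exact: isolated_vrel_component.
- move=> x y x_vert; rewrite inE => xy; apply: contraT => y_iso.
  have /setP/(_ x) := isolated_vrel_component y_iso.
  by rewrite !inE vrel_sym xy => /esym/eqP xE; rewrite -xE x_vert in y_iso.
- exact: mem_component.
congr addn; rewrite -imset_comp; apply: card_imset_ker => d d' _ _ /=.
rewrite !eq_component ?connect_vrel_drel0 //; first exact: drel_sym (subgraph0 G).
exact: vrel_sym.
Qed.

End VertexComponents.

Lemma iter_inj (T : Type) (f : T -> T) n : injective f -> injective (iter n f).
Proof. by move=> f_inj; elim: n => [|n IHn] x y //= /f_inj /IHn. Qed.

Section SubgraphParity.
Variable G : ribbon_graph.
Local Notation D := (rg_D G).
Local Notation a := (@rg_inv G).
Local Notation s := (@rg_rot G).
Local Notation vert := (@rg_vert G).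
Variable A : {set D}.
Hypothesis HA : is_subgraph A.

Definition rot_step d := (find (fun k => iter k.+1 s d \in A) (iota 0 #|D|)).+1.

Lemma nextAE d : nextA A d = iter (rot_step d) s d.
Proof. by []. Qed.

Lemma nextA_spec d : d \in A ->
  [/\ 0 < rot_step d, nextA A d \in A
    & forall i, 0 < i < rot_step d -> iter i s d \notin A].
Proof.
move=> dA; set P := fun k => iter k.+1 s d \in A.
have hasP : has P (iota 0 #|D|).
  apply/hasP; exists (fingraph.order s d).-1.
    by rewrite mem_iota /= add0n orderSpred; apply: max_card.
  by rewrite /P orderSpred iter_order //; apply: perm_inj.
have find_lt : find P (iota 0 #|D|) < #|D|.
  by rewrite -[X in _ < X](size_iota 0) -has_find.
split=> //; last first.
  case=> // i /andP[_]; rewrite ltnS => i_lt.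
  have := before_find 0 i_lt; rewrite nth_iota ?add0n; last exact: ltn_trans i_lt find_lt.
  by rewrite /P => ->.
by have := nth_find 0 hasP; rewrite nth_iota // add0n.
Qed.

Lemma nextA_inj : {in A &, injective (nextA A)}.
Proof.
have le_inj d1 d2 : d1 \in A -> d2 \in A -> rot_step d1 <= rot_step d2 ->
    nextA A d1 = nextA A d2 -> d1 = d2.
  move=> d1A d2A le12; have [step1 _ _] := nextA_spec d1A.
  have [_ _ not_in2] := nextA_spec d2A.
  rewrite !nextAE -(subnKC le12) iterD => /(@iter_inj _ s _ (@perm_inj _ s)) d1E.
  case E: (rot_step d2 - rot_step d1) d1E => [// | k] d1E.
  suff /not_in2 : 0 < k.+1 < rot_step d2 by rewrite -d1E d1A.
  by move: step1 le12 E; lia.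
move=> d1 d2 d1A d2A; case: (leqP (rot_step d1) (rot_step d2)) => le; first exact: le_inj.
by move/esym/(le_inj _ _ d2A d1A (ltnW le)).
Qed.

Definition rotA_fun d := if d \in A then nextA A d else d.
Lemma rotA_fun_inj : injective rotA_fun.
Proof.
move=> x y; rewrite /rotA_fun.
case: (boolP (x \in A)) => xA; case: (boolP (y \in A)) => yA //.
- exact: nextA_inj.
- by move=> xy; move: yA; rewrite -xy; have [_ -> _] := nextA_spec xA.
- by move=> xy; move: xA; rewrite xy; have [_ -> _] := nextA_spec yA.
Qed.
Definition rotA := perm rotA_fun_inj.

Definition invA_fun d := if d \in A then a d else d.
Lemma invA_fun_inj : injective invA_fun.
Proof.
move=> x y; rewrite /invA_fun.
case: (boolP (x \in A)) => xA; case: (boolP (y \in A)) => yA //.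
- exact: perm_inj.
- by move=> xy; move: yA; rewrite -xy mem_inv_subgraph // xA.
- by move=> xy; move: xA; rewrite xy mem_inv_subgraph // yA.
Qed.
Definition invA := perm invA_fun_inj.

Definition faceA := (invA * rotA)%g.

Lemma rotAE d : rotA d = if d \in A then nextA A d else d.
Proof. by rewrite permE. Qed.

Lemma invAE d : invA d = if d \in A then a d else d.
Proof. by rewrite permE. Qed.

Lemma faceAE d : d \in A -> faceA d = phiA A d.
Proof. by move=> dA; rewrite permM invAE dA rotAE mem_inv_subgraph // dA. Qed.

Lemma rotA_stab : {homo rotA : d / d \in A}.
Proof. by move=> d dA; rewrite rotAE dA; have [_ -> _] := nextA_spec dA. Qed.

Lemma invA_stab : {homo invA : d / d \in A}.
Proof. by move=> d dA; rewrite invAE dA mem_inv_subgraph. Qed.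

Lemma faceA_stab : {homo faceA : d / d \in A}.
Proof. by move=> d dA; rewrite permM rotA_stab ?invA_stab. Qed.

Lemma rotA_fix d : d \notin A -> rotA d = d.
Proof. by move=> dA; rewrite rotAE (negbTE dA). Qed.

Lemma invA_fix d : d \notin A -> invA d = d.
Proof. by move=> dA; rewrite invAE (negbTE dA). Qed.

Lemma faceA_fix d : d \notin A -> faceA d = d.
Proof. by move=> dA; rewrite permM invA_fix ?rotA_fix. Qed.

Lemma vert_iter_rot n d : vert (iter n s d) = vert d.
Proof. by elim: n => //= n IHn; rewrite rg_rot_vert. Qed.

Lemma rotA_vert d : vert (rotA d) = vert d.
Proof. by rewrite rotAE; case: (d \in A); rewrite // nextAE vert_iter_rot. Qed.

Lemma iter_rot_porbit_rotA n m d : m < n -> d \in A -> iter m s d \in A ->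
  iter m s d \in porbit rotA d.
Proof.
elim: n m d => // n IHn m d m_lt dA mA.
have [step_gt0 _ not_in] := nextA_spec dA.
case: (ltnP m (rot_step d)) => m_step.
  case: m mA m_step {m_lt} => [|m] mA m_step; first exact: porbit_id.
  by move: mA; rewrite (negbTE (not_in m.+1 _)).
have iterE : iter m s d = iter (m - rot_step d) s (rotA d).
  by rewrite rotAE dA nextAE -iterD subnK.
rewrite iterE -(porbit_perm _ 1) expg1; apply: IHn.
- by move: step_gt0 m_step m_lt; lia.
- exact: rotA_stab.
- by rewrite -iterE.
Qed.

Lemma porbit_rotA d d' :
  d \in A -> d' \in A -> (d' \in porbit rotA d) = (vert d' == vert d).
Proof.
move=> dA d'A; apply/idP/eqP.
  by case/porbitP=> i ->; rewrite permX; elim: i => //= i <-; rewrite rotA_vert.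
move/esym/rg_rot_trans => dd'; rewrite -(iter_findex dd').
by apply: (@iter_rot_porbit_rotA (findex s d d').+1); rewrite ?iter_findex.
Qed.

Lemma card_porbits_rotA : #|porbit rotA @: A| = #|vert @: A|.
Proof. by apply: card_imset_ker => d d' dA d'A; rewrite eq_porbit_mem porbit_rotA. Qed.

Lemma porbit_invA d : d \in A -> porbit invA d = [set d; a d].
Proof.
move=> dA; apply/setP => d'; apply/porbitP/idP.
  case=> i ->; rewrite permX; elim: i => [|i]; first by rewrite /= !inE eqxx.
  rewrite /= !inE => /orP[/eqP -> | /eqP ->].
    by rewrite invAE dA eqxx orbT.
  by rewrite invAE mem_inv_subgraph // dA rg_inv_invol eqxx.
rewrite !inE => /orP[/eqP -> | /eqP ->]; [exists 0 | exists 1].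
  by rewrite expg0 perm1.
by rewrite expg1 invAE dA.
Qed.

Lemma card_porbits_invA : #|porbit invA @: A| = nE A.
Proof.
apply: eq_card => K; apply/imsetP/imsetP => -[d dA ->]; exists d => //.
  by rewrite porbit_invA.
by rewrite porbit_invA.
Qed.

Lemma card_subgraph : #|A| = (nE A).*2.
Proof.
have edge_eq d d' : d' \in [set d; a d] -> [set d; a d] = [set d'; a d'].
  by rewrite !inE => /orP[/eqP -> | /eqP ->] //; rewrite setUC rg_inv_invol.
have edges : partition [set [set d; a d] | d in A] A.
  apply/and3P; split.
  - apply/eqP/setP => d; apply/bigcupP/idP => [[K /imsetP[d' d'A ->]] | dA].
      by rewrite !inE => /orP[/eqP -> | /eqP ->]; rewrite ?mem_inv_subgraph.
    by exists [set d; a d]; [apply: imset_f | rewrite !inE eqxx].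
  - apply/trivIsetP => _ _ /imsetP[d1 _ ->] /imsetP[d2 _ ->] neq12.
    rewrite -setI_eq0; apply/eqP/setP => d; rewrite in_setI [RHS]inE.
    by apply/andP => -[/edge_eq d1E /edge_eq d2E]; move: neq12; rewrite d1E d2E eqxx.
  - by apply/imsetP => -[d _ /setP/(_ d)]; rewrite !inE eqxx.
rewrite (card_partition edges) (eq_bigr (fun _ => 2)) ?sum_nat_const ?muln2 //.
by move=> _ /imsetP[d _ ->]; rewrite cards2 eq_sym rg_inv_nofix.
Qed.

Lemma iter_faceA n d : d \in A -> iter n faceA d = iter n (phiA A) d.
Proof.
move=> dA; suff : iter n faceA d = iter n (phiA A) d /\ iter n faceA d \in A by case.
elim: n => [|n [IHn IHA]] //=.
by rewrite faceAE // IHn; split=> //; rewrite -IHn -faceAE // faceA_stab.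
Qed.

Lemma porbit_faceA d : d \in A -> porbit faceA d = component (frel (phiA A)) d.
Proof.
move=> dA; apply/setP => d'; rewrite inE; apply/porbitP/idP.
  by case=> i ->; rewrite permX iter_faceA //; apply: fconnect_iter.
by move=> dd'; exists (findex (phiA A) d d'); rewrite permX iter_faceA // iter_findex.
Qed.

Lemma card_porbits_faceA : #|porbit faceA @: A| = ncomp (frel (phiA A)) (mem A).
Proof.
apply: eq_card => K; apply/imsetP/imsetP => -[d dA ->]; exists d => //.
  by rewrite porbit_faceA.
by rewrite porbit_faceA.
Qed.

Lemma odd_faces :
  odd (ncomp (frel (phiA A)) (mem A)) = odd (nE A) (+) odd #|vert @: A|.
Proof.
have := odd_permM invA rotA; rewrite -/faceA /odd_perm.
rewrite (card_porbits_on faceA_fix faceA_stab) (card_porbits_on invA_fix invA_stab).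
rewrite (card_porbits_on rotA_fix rotA_stab).
rewrite card_porbits_faceA card_porbits_invA card_porbits_rotA.
rewrite -(cardsC A) card_subgraph !oddD odd_double.
by case: (odd _); case: (odd _); case: (odd _); case: (odd _).
Qed.

End SubgraphParity.

Section EulerCharacteristic.
Variable G : ribbon_graph.
Local Notation D := (rg_D G).
Local Notation vert := (@rg_vert G).
Implicit Types A : {set D}.
Local Open Scope ring_scope.

Lemma setT_subgraph : is_subgraph [set: D].
Proof.
apply/eqP/setP => d; rewrite inE; apply/imsetP; exists (@rg_inv G d) => //.
by rewrite rg_inv_invol.
Qed.

Lemma card_V_split A : #|rg_V G| = (#|vert @: A| + n_isol A)%N.
Proof.
rewrite /n_isol -(cardsC (vert @: A)); congr addn; apply: eq_card => x.
rewrite !inE; apply/negP/forallP => [x_iso d | x_iso /imsetP[d dA xE]].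
  by apply/implyP => dA; apply/eqP => dE; apply: x_iso; apply/imsetP; exists d.
by move: (x_iso d); rewrite dA xE eqxx.
Qed.

Lemma sH_even A : is_subgraph A -> exists q : int, sH A = 2 * q.
Proof.
move=> HA; have := odd_faces HA; have := card_V_split A.
set f := ncomp _ _; set vA := #|_| => VE odd_f.
have /negbTE even_sum : ~~ odd (f + vA + nE A).
  by rewrite !oddD odd_f; case: (odd _); case: (odd _).
exists ((nC A)%:Z - (n_isol A)%:Z + (nE A)%:Z - ((f + vA + nE A)./2)%:Z).
have := halfK (f + vA + nE A); rewrite even_sum subn0 -muln2.
by rewrite /sH /bc /nV -/f; lia.
Qed.

Lemma sH_nul A : (nC A)%:Z - (bc A)%:Z + nul A = sH A.
Proof. by rewrite /sH /nul /rk; lia. Qed.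

Lemma twice_nul A : is_subgraph A ->
  2 * nul A = sH [set: D] + 2 * (kH A)%:Z + sH A - sperp A.
Proof.
move=> HA; have := kH_add HA; have := nC_setT G.
by rewrite /sperp /nCperp /sH /nul /rk; lia.
Qed.

End EulerCharacteristic.

Local Open Scope ring_scope.

Theorem lemma4p1 (G : ribbon_graph) (R : realFieldType) (X Y Z : R) :
  Y != 0 ->
  BR G X Y Z = Y ^ genus_Sigma G * Ppoly G (X - 1) Y (Y * Z ^+ 2) Y^-1.
Proof.
move=> Y0; have [g sHT] := sH_even (setT_subgraph G).
have -> : genus_Sigma G = g by rewrite /genus_Sigma sHT mulKz.
rewrite /BR /Ppoly mulr_sumr; apply: eq_bigr => A HA.
have [q sHA] := sH_even HA; set k := kH A.
set p := g + k%:Z + q - nul A.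
have sperpE : sperp A = 2 * p by have := twice_nul HA; rewrite sHT sHA /p; lia.
have nulE : nul A = g + k%:Z + q - p by rewrite /p; lia.
clearbody p.
have -> : rk [set: rg_D G] - rk A = (nC A)%:Z - (nC [set: rg_D G])%:Z by rewrite /rk; lia.
rewrite sH_nul sHA sperpE !mulKz // nulE !(expfzDr _ _ Y0) expfzMl exprz_inv.
rewrite -exprz_exp !exprnP.
move: ((X - 1) ^ _) (Y ^ g) (Y ^ k) (Y ^ q) (Y ^ (- p)) ((Z ^ 2) ^ q) => x yg yk yq yp zq.
ring.
Qed.
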